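(* Let $Q$ and $W$ satisfy the standing assumptions and $l\in\mathbb N_0$. Then $Q$ is simulated by $\hat Q^{I^l_0}$ w.r.t. $U\times Y$, i.e. there exists a simulation relation from $Q$ to $\hat Q^{I^l_0}$ w.r.t. $U\times Y$.
   Context: Strings and signals: $\diamond$ is a symbol not in any other set considered. For a set $A$ and $l\in\mathbb N_0$, $A^l$ is the set of strings of length $l$ over $A$, indexed $\zeta=\zeta(0)\cdots\zeta(l-1)$; $\lambda$ is the empty string and $\cdot$ denotes concatenation. For a map $w$ on $\mathbb Z$ (or a string) and integers $t_1\le t_2$, $w|_{[t_1,t_2]}=w(t_1)\cdots w(t_2)$ is the string of length $t_2-t_1+1$ (absolute time forgotten); if $t_2<t_1$ it is $\lambda$. State machines: a state machine is $Q=(X,U,Y,\delta,X_0)$ with $X_0\subseteq X$, $\delta\subseteq X\times U\times Y\times X$. Let $H_\delta(x)=\{y:\exists u,x'.\,(x,u,y,x')\in\delta\}$, $F_\delta(x,u)=\{x':\exists y\in H_\delta(x).\,(x,u,y,x')\in\delta\}$. The full behavior $\mathcal B_f(Q)$ is the set of $(\mu,\nu,\xi)\in(U\times Y\times X)^{\mathbb N_0}$ with $\xi(0)\in X_0$ and $(\xi(k),\mu(k),\nu(k),\xi(k+1))\in\delta$ for all $k\in\mathbb N_0$. $Q$ is live and reachable if every $x\in X_0$ is $\xi(0)$ for some $(\mu,\nu,\xi)\in\mathcal B_f(Q)$ and every $x\in X$ is $\xi(k)$ for some such trajectory and some $k$. Standing assumptions: $Q=(X,U,Y,\delta,X_0)$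 is live and reachable and satisfies $(x,u,y,x')\in\delta\iff(x'\in F_\delta(x,u)\wedge y\in H_\delta(x))$ for all $x,x'\in X,u\in U,y\in Y$; the external signal space $W$ is finite and either $W=U\times Y$ or $W=Y$. The projection $\pi_W(u,y)$ is $(u,y)$ if $W=U\times Y$ and $y$ if $W=Y$ (likewise $\pi_{U\times Y}(u,y)=(u,y)$, $\pi_Y(u,y)=y$). Behaviors: $\mathcal B_S(Q)$ is the set of pairs $(w,\xi)$ of maps on $\mathbb Z$ with $w(k)=\xi(k)=\diamond$ for $k<0$ and $(w(k),\xi(k))=(\pi_W(\mu(k),\nu(k)),\xi'(k))$ for $k\ge0$, for some $(\mu,\nu,\xi')\in\mathcal B_f(Q)$. Corresponding strings: for integers $a,b$ and $x\in X$, $E^{[a,b]}(x)=\{\zeta:\exists(w,\xi)\in\mathcal B_S(Q),k\in\mathbb N_0:\ \xi(k)=x,\ \zeta=w|_{[k+a,k+b]}\}$. For $l,m\in\mathbb N_0$ with $m\le l$, $I^l_m=[m-l,m-1]$. Abstract state machine: $\hat Q^{I^l_m}=(\hat X^{I^l_m},U,Y,\hat\delta^{I^l_m},\hat X^{I^l_m}_0)$ with $\hat X^{I^l_m}=\bigcup_{x\in X}E^{I^l_m}(x)$, $\hat X^{I^l_m}_0=\bigcup_{x\in X_0}E^{I^l_m}(x)$, and $(\hat x,u,y,\hat x')\in\hat\delta^{I^l_m}$ iff (1) $\hat x'|_{[0,l-m-1]}=(\hat x|_{[0,l-m-1]}\cdot\pi_W(u,y))|_{[1,l-m]}$, (2)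 $\hat x|_{[l-m,l-1]}=(\pi_W(u,y)\cdot\hat x'|_{[l-m,l-2]})|_{[0,m-1]}$, and (3) there are $x,x'\in X$ with $\hat x\in E^{I^l_m}(x)$, $\hat x'\in E^{I^l_m}(x')$, $(x,u,y,x')\in\delta$. Simulation relations: for state machines $Q_i=(X_i,U,Y,\delta_i,X_{0,i})$, $i=1,2$, and $V\in\{U\times Y,Y\}$, a relation $\mathcal R\subseteq X_1\times X_2$ is a simulation relation from $Q_1$ to $Q_2$ w.r.t. $V$ if (a) for every $x_1\in X_{0,1}$ there is $x_2\in X_{0,2}$ with $(x_1,x_2)\in\mathcal R$, and (b) for all $(x_1,x_2)\in\mathcal R$ and $(x_1,u_1,y_1,x_1')\in\delta_1$ there exist $u_2,y_2,x_2'$ with $(x_2,u_2,y_2,x_2')\in\delta_2$, $(x_1',x_2')\in\mathcal R$ and $\pi_V(u_1,y_1)=\pi_V(u_2,y_2)$. *)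

From Stdlib Require Import ZArith List.
Import ListNotations.
Open Scope Z_scope.

(* Choice of the external signal space: W = U x Y or W = Y. *)
Inductive wkind : Type := WUY | WY.

Definition Wt (U Y : Type) (k : wkind) : Type :=
  match k with WUY => (U * Y)%type | WY => Y end.

Definition piW {U Y : Type} (k : wkind) (u : U) (y : Y) : Wt U Y k :=
  match k return Wt U Y k with WUY => (u, y) | WY => y end.

Definition W_finite (U Y : Type) (k : wkind) : Prop :=
  exists l : list (Wt U Y k), forall w, In w l.

(* Symbols: W extended by the diamond symbol, rendered as [option W]
   with [None] = diamond. *)

Definition Hd {X U Y : Type} (delta : X -> U -> Y -> X -> Prop) (x : X) (y : Y) : Prop :=
  exists u x', delta x u y x'.
Definition Fd {X U Y : Type} (delta : X -> U -> Y -> X -> Prop) (x : X) (u : U) (x' : X) : Prop :=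
  exists y, Hd delta x y /\ delta x u y x'.

Definition full_behavior {X U Y : Type} (delta : X -> U -> Y -> X -> Prop) (X0 : X -> Prop)
  (mu : nat -> U) (nu : nat -> Y) (xi : nat -> X) : Prop :=
  X0 (xi 0%nat) /\ forall k : nat, delta (xi k) (mu k) (nu k) (xi (S k)).

Definition live_reachable {X U Y : Type} (delta : X -> U -> Y -> X -> Prop) (X0 : X -> Prop) : Prop :=
  (forall x, X0 x -> exists mu nu xi, full_behavior delta X0 mu nu xi /\ xi 0%nat = x) /\
  (forall x : X, exists mu nu xi (k : nat), full_behavior delta X0 mu nu xi /\ xi k = x).

Definition delta_product {X U Y : Type} (delta : X -> U -> Y -> X -> Prop) : Prop :=
  forall x u y x', delta x u y x' <-> (Fd delta x u x' /\ Hd delta x y).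

Definition BS {X U Y : Type} (k : wkind) (delta : X -> U -> Y -> X -> Prop) (X0 : X -> Prop)
  (w : Z -> option (Wt U Y k)) (xi : Z -> option X) : Prop :=
  exists mu nu xi', full_behavior delta X0 mu nu xi' /\
    forall t : Z,
      (t < 0 -> w t = None /\ xi t = None) /\
      (0 <= t -> w t = Some (piW k (mu (Z.to_nat t)) (nu (Z.to_nat t)))
                 /\ xi t = Some (xi' (Z.to_nat t))).

(* w|_[t1,t2] for a map on Z (empty if t2 < t1) *)
Definition restrictZ {A : Type} (w : Z -> A) (t1 t2 : Z) : list A :=
  map (fun i : nat => w (t1 + Z.of_nat i)) (seq 0 (Z.to_nat (t2 - t1 + 1))).

(* zeta|_[t1,t2] for a string (indices 0-based; empty if t2 < t1) *)
Definition restrictS {A : Type} (s : list A) (t1 t2 : Z) : list A :=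
  firstn (Z.to_nat (t2 - t1 + 1)) (skipn (Z.to_nat t1) s).

Definition Estr {X U Y : Type} (k : wkind) (delta : X -> U -> Y -> X -> Prop) (X0 : X -> Prop)
  (a b : Z) (x : X) (zeta : list (option (Wt U Y k))) : Prop :=
  exists w xi, BS k delta X0 w xi /\
    exists n : nat, xi (Z.of_nat n) = Some x /\ zeta = restrictZ w (Z.of_nat n + a) (Z.of_nat n + b).

Definition Ilo (l m : nat) : Z := Z.of_nat m - Z.of_nat l.
Definition Ihi (l m : nat) : Z := Z.of_nat m - 1.

Definition Xhat {X U Y : Type} (k : wkind) (delta : X -> U -> Y -> X -> Prop) (X0 : X -> Prop)
  (l m : nat) (xh : list (option (Wt U Y k))) : Prop :=
  exists x : X, Estr k delta X0 (Ilo l m) (Ihi l m) x xh.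

Definition Xhat0 {X U Y : Type} (k : wkind) (delta : X -> U -> Y -> X -> Prop) (X0 : X -> Prop)
  (l m : nat) (xh : list (option (Wt U Y k))) : Prop :=
  exists x : X, X0 x /\ Estr k delta X0 (Ilo l m) (Ihi l m) x xh.

Definition deltahat {X U Y : Type} (k : wkind) (delta : X -> U -> Y -> X -> Prop) (X0 : X -> Prop)
  (l m : nat) (xh : list (option (Wt U Y k))) (u : U) (y : Y) (xh' : list (option (Wt U Y k))) : Prop :=
  let L := Z.of_nat l in
  let M := Z.of_nat m in
  let p := Some (piW k u y) in
  (* (1) *)
  restrictS xh' 0 (L - M - 1) = restrictS (restrictS xh 0 (L - M - 1) ++ [p]) 1 (L - M) /\
  (* (2) *)
  restrictS xh (L - M) (L - 1) = restrictS (p :: restrictS xh' (L - M) (L - 2)) 0 (M - 1) /\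
  (* (3) *)
  exists x x', Estr k delta X0 (Ilo l m) (Ihi l m) x xh /\
               Estr k delta X0 (Ilo l m) (Ihi l m) x' xh' /\ delta x u y x'.

Definition is_simulation {X1 X2 U Y : Type} (vk : wkind)
  (S1 : X1 -> Prop) (I1 : X1 -> Prop) (d1 : X1 -> U -> Y -> X1 -> Prop)
  (S2 : X2 -> Prop) (I2 : X2 -> Prop) (d2 : X2 -> U -> Y -> X2 -> Prop)
  (R : X1 -> X2 -> Prop) : Prop :=
  (forall x1 x2, R x1 x2 -> S1 x1 /\ S2 x2) /\
  (forall x1, I1 x1 -> exists x2, I2 x2 /\ R x1 x2) /\
  (forall x1 x2 u1 y1 x1', R x1 x2 -> d1 x1 u1 y1 x1' ->
     exists u2 y2 x2', d2 x2 u2 y2 x2' /\ R x1' x2' /\ piW vk u1 y1 = piW vk u2 y2).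

(* The relation pairing a state x with every window of the last l external
   symbols seen right before some visit of x is a simulation.  Given such a
   window at a visit of x at time n and a transition (x, u, y, x'), cut the
   trajectory at n, take the transition, and continue along any trajectory
   reaching x' (reachability).  On the new trajectory x' is visited at n + 1,
   and its window is the old one shifted by the symbol pi_W(u, y), which is
   exactly the transition rule of the abstract machine for m = 0. *)

From Stdlib Require Import ZArith List Lia.
Import ListNotations.
Open Scope Z_scope.
Set Implicit Arguments.

Section Windows.

Variable A : Type.

Lemma restrictZ_ext (w w' : Z -> A) (t1 t2 : Z) :
  (forall t, t1 <= t <= t2 -> w t = w' t) -> restrictZ w t1 t2 = restrictZ w' t1 t2.
Proof.
  intros Hagree. unfold restrictZ. apply map_ext_in. intros i Hi.
  apply in_seq in Hi. apply Hagree. lia.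
Qed.

Lemma length_restrictZ (w : Z -> A) (t1 t2 : Z) :
  length (restrictZ w t1 t2) = Z.to_nat (t2 - t1 + 1).
Proof. unfold restrictZ. now rewrite length_map, length_seq. Qed.

Lemma restrictZ_snoc (w : Z -> A) (t1 t2 : Z) :
  t1 <= t2 + 1 -> restrictZ w t1 (t2 + 1) = restrictZ w t1 t2 ++ [w (t2 + 1)].
Proof.
  intros Ht. unfold restrictZ.
  replace (Z.to_nat (t2 + 1 - t1 + 1)) with (S (Z.to_nat (t2 - t1 + 1))) by lia.
  rewrite seq_S, map_app. simpl. do 3 f_equal. lia.
Qed.

Lemma restrictZ_cons (w : Z -> A) (t1 t2 : Z) :
  t1 <= t2 -> restrictZ w t1 t2 = w t1 :: restrictZ w (t1 + 1) t2.
Proof.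
  intros Ht. unfold restrictZ.
  replace (Z.to_nat (t2 - t1 + 1)) with (S (Z.to_nat (t2 - (t1 + 1) + 1))) by lia.
  simpl. f_equal; [f_equal; lia|].
  rewrite <- seq_shift, map_map. apply map_ext. intros i. f_equal. lia.
Qed.

Lemma restrictS_whole (s : list A) (t2 : Z) :
  Z.of_nat (length s) <= t2 + 1 -> restrictS s 0 t2 = s.
Proof. intros Hlen. apply firstn_all2. lia. Qed.

Lemma restrictS_empty (s : list A) (t1 t2 : Z) : t2 < t1 -> restrictS s t1 t2 = [].
Proof. intros Ht. unfold restrictS. now replace (Z.to_nat (t2 - t1 + 1)) with 0%nat by lia. Qed.

Lemma restrictZ_slide (w : Z -> A) (t1 t2 : Z) :
  t1 <= t2 + 1 ->
  restrictS (restrictZ w t1 t2 ++ [w (t2 + 1)]) 1 (t2 - t1 + 1)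
  = restrictZ w (t1 + 1) (t2 + 1).
Proof.
  intros Ht. rewrite <- restrictZ_snoc, restrictZ_cons by lia.
  unfold restrictS. apply firstn_all2. rewrite length_restrictZ. simpl. lia.
Qed.

End Windows.

Section Splicing.

Variable T : Type.

Definition splice (n : nat) (f g : nat -> T) (i : nat) : T :=
  if Nat.ltb i n then f i else g (i - n)%nat.

Definition scons (a : T) (g : nat -> T) (i : nat) : T :=
  match i with O => a | S i => g i end.

Definition shift (j : nat) (g : nat -> T) (i : nat) : T := g (i + j)%nat.

Lemma splice_lt n f g i : (i < n)%nat -> splice n f g i = f i.
Proof. intros Hi. unfold splice. now rewrite (proj2 (Nat.ltb_lt i n) Hi). Qed.

Lemma splice_ge n f g i : (n <= i)%nat -> splice n f g i = g (i - n)%nat.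
Proof. intros Hi. unfold splice. now rewrite (proj2 (Nat.ltb_ge i n) Hi). Qed.

End Splicing.

Section Trajectories.

Variables (X U Y : Type) (k : wkind).
Variable delta : X -> U -> Y -> X -> Prop.
Variable X0 : X -> Prop.

Definition signal_of (mu : nat -> U) (nu : nat -> Y) (t : Z) : option (Wt U Y k) :=
  if t <? 0 then None else Some (piW k (mu (Z.to_nat t)) (nu (Z.to_nat t))).

Definition states_of (xs : nat -> X) (t : Z) : option X :=
  if t <? 0 then None else Some (xs (Z.to_nat t)).

Lemma BS_signal_of mu nu xs :
  full_behavior delta X0 mu nu xs -> BS k delta X0 (signal_of mu nu) (states_of xs).
Proof.
  intros Hfb. exists mu, nu, xs. split; [exact Hfb|].
  intros t. unfold signal_of, states_of. split; intros Ht.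
  - now rewrite (proj2 (Z.ltb_lt t 0) Ht).
  - now rewrite (proj2 (Z.ltb_ge t 0) Ht).
Qed.

Lemma Estr_iff_trajectory (a b : Z) (x : X) (zeta : list (option (Wt U Y k))) :
  Estr k delta X0 a b x zeta <->
  exists mu nu xs (n : nat), full_behavior delta X0 mu nu xs /\ xs n = x /\
    zeta = restrictZ (signal_of mu nu) (Z.of_nat n + a) (Z.of_nat n + b).
Proof.
  split.
  - intros (w & xi & (mu & nu & xs & Hfb & Hw) & n & Hxn & Hzeta).
    exists mu, nu, xs, n. split; [exact Hfb|]. split.
    + destruct (proj2 (Hw (Z.of_nat n)) (Nat2Z.is_nonneg n)) as [_ Hxi].
      rewrite Nat2Z.id in Hxi. congruence.
    + rewrite Hzeta. apply restrictZ_ext. intros t _. unfold signal_of.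
      destruct (Z.ltb_spec t 0) as [Ht | Ht].
      * exact (proj1 (proj1 (Hw t) Ht)).
      * exact (proj1 (proj2 (Hw t) Ht)).
  - intros (mu & nu & xs & n & Hfb & Hxn & Hzeta).
    exists (signal_of mu nu), (states_of xs). split; [now apply BS_signal_of|].
    exists n. split; [|exact Hzeta].
    unfold states_of. rewrite (proj2 (Z.ltb_ge _ 0) (Nat2Z.is_nonneg n)), Nat2Z.id.
    now rewrite Hxn.
Qed.

Lemma full_behavior_splice mu nu xs mu' nu' xs' (n j : nat) u y :
  full_behavior delta X0 mu nu xs -> full_behavior delta X0 mu' nu' xs' ->
  delta (xs n) u y (xs' j) ->
  full_behavior delta X0
    (splice n mu (scons u (shift j mu'))) (splice n nu (scons y (shift j nu')))
    (splice (S n) xs (shift j xs')).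
Proof.
  intros [Hinit Hstep] [_ Hstep'] Hcut. split.
  - now rewrite splice_lt by lia.
  - intros i. destruct (Nat.lt_trichotomy i n) as [Hi | [-> | Hi]].
    + rewrite !splice_lt by lia. apply Hstep.
    + rewrite splice_lt, !splice_ge, Nat.sub_diag, Nat.sub_diag by lia. exact Hcut.
    + rewrite !splice_ge by lia.
      replace (i - n)%nat with (S (i - S n)) by lia.
      replace (S i - S n)%nat with (S (i - S n)) by lia.
      unfold scons, shift. apply Hstep'.
Qed.

Lemma signal_of_splice_lt n mu nu g h t :
  t < Z.of_nat n -> signal_of (splice n mu g) (splice n nu h) t = signal_of mu nu t.
Proof.
  intros Ht. unfold signal_of. destruct (Z.ltb_spec t 0); [reflexivity|].
  now rewrite !splice_lt by lia.
Qed.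

Lemma signal_of_splice_at n mu nu u y g h :
  signal_of (splice n mu (scons u g)) (splice n nu (scons y h)) (Z.of_nat n)
  = Some (piW k u y).
Proof.
  unfold signal_of. rewrite (proj2 (Z.ltb_ge _ 0) (Nat2Z.is_nonneg n)), Nat2Z.id.
  now rewrite !splice_ge, Nat.sub_diag by lia.
Qed.

Lemma Estr_past_window_init (x : X) (l : nat) :
  live_reachable delta X0 -> X0 x ->
  exists xh, Estr k delta X0 (Ilo l 0) (Ihi l 0) x xh.
Proof.
  intros [Hlive _] Hx.
  destruct (Hlive x Hx) as (mu & nu & xs & Hfb & Hxs0).
  eexists. apply Estr_iff_trajectory. exists mu, nu, xs, 0%nat. eauto.
Qed.

(* Condition (2) of the abstract transition is vacuous for m = 0, and (1) is
   the window shift [restrictZ_slide]. *)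
Lemma Estr_past_window_step (l : nat) x xh u y x' :
  live_reachable delta X0 ->
  Estr k delta X0 (Ilo l 0) (Ihi l 0) x xh -> delta x u y x' ->
  exists xh', deltahat k delta X0 l 0 xh u y xh' /\
              Estr k delta X0 (Ilo l 0) (Ihi l 0) x' xh'.
Proof.
  intros [_ Hreach] Hwin Hxx'.
  pose proof Hwin as (mu & nu & xs & n & Hfb & Hxn & Hxh)%Estr_iff_trajectory.
  destruct (Hreach x') as (mu' & nu' & xs' & j & Hfb' & Hxj).
  set (w := signal_of (splice n mu (scons u (shift j mu')))
                      (splice n nu (scons y (shift j nu')))).
  assert (Hfb_w : full_behavior delta X0 (splice n mu (scons u (shift j mu')))
                    (splice n nu (scons y (shift j nu'))) (splice (S n) xs (shift j xs'))).
  { apply full_behavior_splice; [exact Hfb | exact Hfb' | congruence]. }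
  assert (Hxh_w : xh = restrictZ w (Z.of_nat n - Z.of_nat l) (Z.of_nat n - 1)).
  { rewrite Hxh. unfold Ilo, Ihi.
    replace (Z.of_nat n + (Z.of_nat 0 - Z.of_nat l)) with (Z.of_nat n - Z.of_nat l) by lia.
    replace (Z.of_nat n + (Z.of_nat 0 - 1)) with (Z.of_nat n - 1) by lia.
    apply restrictZ_ext. intros t Ht. symmetry. apply signal_of_splice_lt. lia. }
  exists (restrictZ w (Z.of_nat n - Z.of_nat l + 1) (Z.of_nat n)).
  assert (Hwin' : Estr k delta X0 (Ilo l 0) (Ihi l 0) x'
                    (restrictZ w (Z.of_nat n - Z.of_nat l + 1) (Z.of_nat n))).
  { apply Estr_iff_trajectory. do 3 eexists. exists (S n).
    split; [exact Hfb_w|]. split.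
    - rewrite splice_ge, Nat.sub_diag by lia. exact Hxj.
    - unfold Ilo, Ihi. f_equal; lia. }
  split; [|exact Hwin'].
  split; [|split].
  - rewrite !restrictS_whole by (rewrite ?Hxh_w, length_restrictZ; lia).
    rewrite Hxh_w.
    replace (Some (piW k u y)) with (w (Z.of_nat n - 1 + 1))
      by (replace (Z.of_nat n - 1 + 1) with (Z.of_nat n) by lia;
          apply signal_of_splice_at).
    replace (Z.of_nat l - Z.of_nat 0)
      with (Z.of_nat n - 1 - (Z.of_nat n - Z.of_nat l) + 1) by lia.
    rewrite restrictZ_slide by lia. f_equal; lia.
  - rewrite !restrictS_empty by lia. reflexivity.
  - exists x, x'. auto.
Qed.

End Trajectories.

Theorem mainTheorem4 (X U Y : Type) (delta : X -> U -> Y -> X -> Prop) (X0 : X -> Prop)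
  (k : wkind)
  (Hlr : live_reachable delta X0)
  (Hprod : delta_product delta)
  (Hfin : W_finite U Y k)
  (l : nat) :
  exists R : X -> list (option (Wt U Y k)) -> Prop,
    is_simulation WUY
      (fun _ : X => True) X0 delta
      (Xhat k delta X0 l 0) (Xhat0 k delta X0 l 0) (deltahat k delta X0 l 0)
      R.
Proof.
  exists (Estr k delta X0 (Ilo l 0) (Ihi l 0)).
  split; [|split].
  - intros x xh Hwin. split; [exact I | now exists x].
  - intros x Hx. destruct (Estr_past_window_init k x l Hlr Hx) as [xh Hwin].
    exists xh. split; [now exists x | exact Hwin].
  - intros x xh u y x' Hwin Hxx'.
    destruct (Estr_past_window_step u y x' Hlr Hwin Hxx') as (xh' & Hstep & Hwin').
    now exists u, y, xh'.
Qed.
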